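(* Let $X,Y,Z$ be random variables on finite alphabets $\mathcal{X},\mathcal{Y},\mathcal{Z}$. For each $y\in\mathcal{Y}$ with $\Pr(Y=y)>0$, let $(A_y,B_y,C_y)$ be the random triple on $\mathcal{X}\times\mathcal{Y}\times\mathcal{Z}$ with $$\Pr(A_y=x,B_y=y',C_y=z)=\begin{cases}0 & \text{if } \Pr(Z=z)=0,\\ \dfrac{\Pr(X=x,Y=y',Z=z)\,\Pr(Z=z\mid Y=y)}{\Pr(Z=z)} & \text{otherwise.}\end{cases}$$ Then $\sum_{y:\Pr(Y=y)>0}\Pr(Y=y)\,H(A_y)\le H(X)$.
   Context: $H$ denotes Shannon entropy. *)

From mathcomp Require Import all_boot all_order all_algebra.
From mathcomp Require Import all_classical all_reals.
From mathcomp Require Import exp.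
Set Implicit Arguments. Unset Strict Implicit. Unset Printing Implicit Defensive.
Import Order.TTheory GRing.Theory Num.Theory.
Local Open Scope ring_scope.

Section Defs.
Variable R : realType.

Definition is_pmf3 (TX TY TZ : finType) (p : TX -> TY -> TZ -> R) : Prop :=
  (forall x y z, 0 <= p x y z) /\ \sum_x \sum_y \sum_z p x y z = 1.

Definition entropy (T : finType) (q : T -> R) : R :=
  - \sum_(t : T) (if q t == 0 then 0 else q t * ln (q t)).

Variables (TX TY TZ : finType) (p : TX -> TY -> TZ -> R).

Definition pX (x : TX) : R := \sum_y \sum_z p x y z.
Definition pY (y : TY) : R := \sum_x \sum_z p x y z.
Definition pZ (z : TZ) : R := \sum_x \sum_y p x y z.
Definition pYZ (y : TY) (z : TZ) : R := \sum_x p x y z.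

(* Pr(Z = z | Y = y), used only when Pr(Y = y) > 0. *)
Definition condZY (y : TY) (z : TZ) : R := pYZ y z / pY y.

Definition pABC (y : TY) (x : TX) (y' : TY) (z : TZ) : R :=
  if pZ z == 0 then 0 else p x y' z * condZY y z / pZ z.

Definition pA (y : TY) (x : TX) : R := \sum_y' \sum_z pABC y x y' z.

End Defs.

(* The pmf of X is the mixture sum_y Pr(Y = y) Pr(A_y = .) of the pmfs of the A_y:
   summing the defining formula of Pr(A_y = x, B_y = y', C_y = z) against Pr(Y = y)
   over y turns the factor Pr(Z = z | Y = y) Pr(Y = y) into Pr(Z = z), which cancels.
   Entropy is concave because t |-> t ln t is convex (it lies above its tangent
   lines), so Jensen's inequality gives sum_y Pr(Y = y) H(A_y) <= H(X). *)
From mathcomp Require Import all_boot all_order all_algebra.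
From mathcomp Require Import all_classical all_reals.
From mathcomp Require Import exp.
From mathcomp Require Import ring lra.
Set Implicit Arguments. Unset Strict Implicit. Unset Printing Implicit Defensive.
Import Order.TTheory GRing.Theory Num.Theory.
Local Open Scope ring_scope.

Section XlnxConvex.
Variable R : realType.

Definition xlnx (t : R) : R := if t == 0 then 0 else t * ln t.

Lemma entropyE (T : finType) (q : T -> R) :
  entropy q = - \sum_(t : T) xlnx (q t).
Proof. by []. Qed.

Lemma xlnx_tangent (a t : R) : 0 < a -> 0 <= t ->
  xlnx a + (1 + ln a) * (t - a) <= xlnx t.
Proof.
move=> a_gt0 t_ge0; rewrite /xlnx (gt_eqF a_gt0).
have [->|t_neq0] := eqVneq t 0; first by rewrite ?eqxx; lra.
have t_gt0 : 0 < t by rewrite lt_def t_neq0.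
have ln_at : ln a - ln t <= a / t - 1.
  rewrite -ln_div ?posrE // -[X in ln X](subrK 1 (a / t)) addrC.
  by apply: le_ln1Dx; have := divr_gt0 a_gt0 t_gt0; lra.
have := ler_wpM2l (ltW t_gt0) ln_at.
rewrite mulrBr mulrBr mulr1 mulrCA divff ?mulr1 //; lra.
Qed.

Lemma xlnx_jensen (I : finType) (P : pred I) (w t : I -> R) :
  (forall i, P i -> 0 <= w i) -> (forall i, P i -> 0 <= t i) ->
  \sum_(i | P i) w i = 1 ->
  xlnx (\sum_(i | P i) w i * t i) <= \sum_(i | P i) w i * xlnx (t i).
Proof.
move=> w_ge0 t_ge0 w_sum1.
set a := \sum_(i | P i) w i * t i.
have wt_ge0 i : P i -> 0 <= w i * t i by move=> Pi; rewrite mulr_ge0 ?w_ge0 ?t_ge0.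
have [a_eq0|a_neq0] := eqVneq a 0.
  rewrite a_eq0 /xlnx eqxx big1 // => i Pi.
  have /eqP := psumr_eq0P wt_ge0 a_eq0 Pi.
  by rewrite mulf_eq0 => /orP[/eqP-> | /eqP->]; rewrite ?mul0r ?eqxx ?mulr0.
have a_gt0 : 0 < a by rewrite lt_def a_neq0 sumr_ge0.
apply: (le_trans _ (ler_sum _ (fun i Pi =>
  ler_wpM2l (w_ge0 i Pi) (xlnx_tangent a_gt0 (t_ge0 i Pi))))).
under eq_bigr => i _ do rewrite mulrDr mulrCA mulrBr.
rewrite big_split /= -!big_distrl /= w_sum1 mul1r -big_distrr sumrB /= -/a.
by rewrite -big_distrl /= w_sum1 mul1r subrr mulr0 addr0.
Qed.

End XlnxConvex.

Section Mixture.
Variables (R : realType) (TX TY TZ : finType) (p : TX -> TY -> TZ -> R).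
Hypothesis p_ge0 : forall x y z, 0 <= p x y z.
Hypothesis p_sum1 : \sum_x \sum_y \sum_z p x y z = 1.

Lemma pY_ge0 y : 0 <= pY p y.
Proof. by apply: sumr_ge0 => x _; apply: sumr_ge0. Qed.

Lemma pZ_ge0 z : 0 <= pZ p z.
Proof. by apply: sumr_ge0 => x _; apply: sumr_ge0. Qed.

Lemma pYZ_ge0 y z : 0 <= pYZ p y z.
Proof. exact: sumr_ge0. Qed.

Lemma pY_sumYZ y : pY p y = \sum_z pYZ p y z.
Proof. exact: exchange_big. Qed.

Lemma pZ_sumYZ z : pZ p z = \sum_y pYZ p y z.
Proof. exact: exchange_big. Qed.

Lemma pZ_eq0_p x y z : pZ p z = 0 -> p x y z = 0.
Proof.
move=> pZ_eq0.
have pxz_eq0 := psumr_eq0P (fun x' _ => sumr_ge0 _ (fun y' _ => p_ge0 x' y' z)) pZ_eq0.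
exact: psumr_eq0P (fun y' _ => p_ge0 x y' z) (pxz_eq0 x isT) y isT.
Qed.

Lemma pY_eq0_pYZ y z : pY p y = 0 -> pYZ p y z = 0.
Proof.
rewrite pY_sumYZ => pY_eq0.
exact: psumr_eq0P (fun z' _ => pYZ_ge0 y z') pY_eq0 z isT.
Qed.

Lemma pA_ge0 y x : 0 <= pA p y x.
Proof.
apply: sumr_ge0 => y' _; apply: sumr_ge0 => z _; rewrite /pABC /condZY.
case: ifP => // _.
by rewrite !(divr_ge0, mulr_ge0) ?p_ge0 ?pY_ge0 ?pYZ_ge0 ?pZ_ge0.
Qed.

Lemma sum_pY_support (f : TY -> R) :
  \sum_(y | 0 < pY p y) pY p y * f y = \sum_y pY p y * f y.
Proof.
rewrite [RHS](bigID (fun y => 0 < pY p y)) /= [X in _ + X]big1 ?addr0 // => y.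
by rewrite lt_def pY_ge0 andbT negbK => /eqP->; rewrite mul0r.
Qed.

Lemma sum_pY_support_eq1 : \sum_(y | 0 < pY p y) pY p y = 1.
Proof.
transitivity (\sum_(y | 0 < pY p y) pY p y * 1).
  by apply: eq_bigr => y _; rewrite mulr1.
rewrite sum_pY_support; under eq_bigr do rewrite mulr1.
by rewrite -p_sum1 [RHS]exchange_big.
Qed.

Lemma pY_mul_pABC y x y' z : pY p y * pABC p y x y' z =
  if pZ p z == 0 then 0 else p x y' z * pYZ p y z / pZ p z.
Proof.
rewrite /pABC /condZY; case: eqP => pZ_eq0; first by rewrite mulr0.
have [pY_eq0|pY_neq0] := eqVneq (pY p y) 0.
  by rewrite pY_eq0_pYZ // pY_eq0 !(mul0r, mulr0).
by field; apply/andP; split=> //; apply/eqP.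
Qed.

Lemma pX_mixture x : pX p x = \sum_(y | 0 < pY p y) pY p y * pA p y x.
Proof.
have weighted_pA y : pY p y * pA p y x = \sum_y' \sum_z
    (if pZ p z == 0 then 0 else p x y' z * pYZ p y z / pZ p z).
  rewrite /pA big_distrr; apply: eq_bigr => y' _.
  by rewrite big_distrr; apply: eq_bigr => z _ /=; rewrite pY_mul_pABC.
rewrite sum_pY_support; under eq_bigr do rewrite weighted_pA.
rewrite exchange_big /pX; apply: eq_bigr => y' _.
rewrite exchange_big; apply: eq_bigr => z _.
case: eqP => [/(pZ_eq0_p x y')-> | /eqP pZ_neq0]; first by rewrite big1.
by rewrite -big_distrl /= -big_distrr /= -pZ_sumYZ mulfK.
Qed.

End Mixture.

Theorem lemma3 (R : realType) (TX TY TZ : finType) (p : TX -> TY -> TZ -> R) :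
  is_pmf3 p ->
  \sum_(y : TY | 0 < pY p y) pY p y * entropy (pA p y) <= entropy (pX p).
Proof.
move=> [p_ge0 p_sum1].
under eq_bigr => y _ do rewrite entropyE mulrN big_distrr /=.
rewrite entropyE sumrN exchange_big lerN2; apply: ler_sum => x _ /=.
rewrite (pX_mixture p_ge0 x); apply: xlnx_jensen.
- by move=> y _; apply: pY_ge0.
- by move=> y _; apply: pA_ge0.
- exact: sum_pY_support_eq1.
Qed.
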